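(* Let $A$ and $B$ be rings, $f: A\to B$ a ring homomorphism and $J$ a proper ideal of $B$. Then: (1) If $A\bowtie^{f}J$ is an Armendariz ring, then $A$ is an Armendariz ring. (2) If $A$ and $f(A)+J$ are Armendariz rings, then $A\bowtie^{f}J$ is an Armendariz ring.
   Context: All rings are associative with identity (not necessarily commutative), ring homomorphisms are unital, and ideals are two-sided. For a ring homomorphism $f:A\to B$ and an ideal $J$ of $B$, the amalgamation of $A$ with $B$ along $J$ with respect to $f$ is the subring $A\bowtie^{f}J=\{(a,f(a)+j)\mid a\in A,\ j\in J\}$ of $A\times B$; $f(A)+J=\{f(a)+j: a\in A, j\in J\}$ is a subring of $B$. A ring $R$ is Armendariz if whenever $p(x)=\sum_{i=0}^n a_ix^i$ and $q(x)=\sum_{j=0}^m b_jx^j$ in $R[x]$ satisfy $p(x)q(x)=0$, then $a_ib_j=0$ for all $i,j$. *)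

From HB Require Import structures.
From mathcomp Require Import all_boot all_order all_algebra.
Set Implicit Arguments. Unset Strict Implicit. Unset Printing Implicit Defensive.
Import GRing.Theory.
Local Open Scope ring_scope.

Definition two_sided_ideal (R : nzRingType) (J : R -> Prop) : Prop :=
  [/\ J 0,
      (forall x y, J x -> J y -> J (x - y)),
      (forall r x, J x -> J (r * x)) &
      (forall r x, J x -> J (x * r))].

Definition proper_two_sided_ideal (R : nzRingType) (J : R -> Prop) : Prop :=
  two_sided_ideal J /\ ~ J 1.

(* Armendariz property of the subring S of R (S given by its carrier):
   whenever p, q have all coefficients in S and p q = 0 in S[x]
   (equivalently in R[x], since S is a subring), all products of
   coefficients vanish. *)
Definition armendariz_on (R : nzRingType) (S : R -> Prop) : Prop :=
  forall p q : {poly R},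
    (forall i, S p`_i) -> (forall i, S q`_i) -> p * q = 0 ->
    forall i j, p`_i * q`_j = 0.

Definition armendariz (R : nzRingType) : Prop := armendariz_on (fun _ : R => True).

Definition amalgamation (A B : nzRingType) (f : {rmorphism A -> B}) (J : B -> Prop)
  : (A * B)%type -> Prop :=
  fun x => exists a j, J j /\ x = (a, f a + j).

Definition fA_plus_J (A B : nzRingType) (f : {rmorphism A -> B}) (J : B -> Prop)
  : B -> Prop :=
  fun b => exists a j, J j /\ b = f a + j.

(* The graph map a |-> (a, f a) is an injective ring morphism from A into
   A ⋈^f J, so A inherits the Armendariz property.  Conversely, the
   projections of A × B send A ⋈^f J into A and onto f(A) + J, and a pair
   of coefficients vanishes once both components do. *)
From HB Require Import structures.
From mathcomp Require Import all_boot all_order all_algebra.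
Set Implicit Arguments. Unset Strict Implicit. Unset Printing Implicit Defensive.
Import GRing.Theory.
Local Open Scope ring_scope.

Lemma armendariz_on_inj_rmorph (R S : nzRingType) (g : {rmorphism R -> S})
    (P : R -> Prop) (Q : S -> Prop) :
  injective g -> (forall x, P x -> Q (g x)) ->
  armendariz_on Q -> armendariz_on P.
Proof.
move=> g_inj PQ armQ p q Pp Pq pq0 i j; apply: g_inj.
have gpq0 : map_poly g p * map_poly g q = 0 by rewrite -rmorphM pq0 rmorph0.
have coefQ (r : {poly R}) : (forall k, P r`_k) -> forall k, Q (map_poly g r)`_k.
  by move=> Pr k; rewrite coef_map; apply: PQ.
have := armQ _ _ (coefQ _ Pp) (coefQ _ Pq) gpq0 i j.
by rewrite !coef_map rmorphM rmorph0.
Qed.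

Lemma armendariz_on_prod (R S : nzRingType) (C : (R * S)%type -> Prop)
    (P : R -> Prop) (Q : S -> Prop) :
  (forall x, C x -> P x.1) -> (forall x, C x -> Q x.2) ->
  armendariz_on P -> armendariz_on Q -> armendariz_on C.
Proof.
move=> CP CQ armP armQ p q Cp Cq pq0 i j.
have fst_pq0 : map_poly fst p * map_poly fst q = 0.
  by rewrite -rmorphM pq0 rmorph0.
have snd_pq0 : map_poly snd p * map_poly snd q = 0.
  by rewrite -rmorphM pq0 rmorph0.
have coefP (r : {poly R * S}) : (forall k, C r`_k) -> forall k, P (map_poly fst r)`_k.
  by move=> Cr k; rewrite coef_map; apply: CP.
have coefQ (r : {poly R * S}) : (forall k, C r`_k) -> forall k, Q (map_poly snd r)`_k.
  by move=> Cr k; rewrite coef_map; apply: CQ.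
have := armP _ _ (coefP _ Cp) (coefP _ Cq) fst_pq0 i j.
have := armQ _ _ (coefQ _ Cp) (coefQ _ Cq) snd_pq0 i j.
rewrite !coef_map /=; case: (p`_i) (q`_j) => [x1 x2] [y1 y2] /= e2 e1.
by rewrite -[(x1, x2) * _]/(x1 * y1, x2 * y2) e1 e2.
Qed.

Section GraphMorphism.
Variables (A B : nzRingType) (f : {rmorphism A -> B}).

Definition graph_of (a : A) : (A * B)%type := (a, f a).

Fact graph_of_is_zmod_morphism : {morph graph_of : x y / x - y}.
Proof. by move=> x y; rewrite /graph_of rmorphB. Qed.

Fact graph_of_is_monoid_morphism : GRing.monoid_morphism graph_of.
Proof. by split; rewrite /graph_of ?rmorph1 // => x y; rewrite rmorphM. Qed.

HB.instance Definition _ :=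
  GRing.isZmodMorphism.Build A (A * B)%type graph_of graph_of_is_zmod_morphism.
HB.instance Definition _ :=
  GRing.isMonoidMorphism.Build A (A * B)%type graph_of graph_of_is_monoid_morphism.

Lemma graph_of_inj : injective graph_of.
Proof. by move=> x y []. Qed.

End GraphMorphism.

Lemma amalgamation_graph (A B : nzRingType) (f : {rmorphism A -> B})
    (J : B -> Prop) (a : A) :
  J 0 -> amalgamation f J (graph_of f a).
Proof. by move=> J0; exists a, 0; rewrite addr0. Qed.

Lemma amalgamation_snd (A B : nzRingType) (f : {rmorphism A -> B})
    (J : B -> Prop) (x : (A * B)%type) :
  amalgamation f J x -> fA_plus_J f J x.2.
Proof. by case=> a [j [Jj ->]]; exists a, j. Qed.

Theorem theorem2p2 (A B : nzRingType) (f : {rmorphism A -> B}) (J : B -> Prop)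
  (hJ : proper_two_sided_ideal J) :
  (armendariz_on (amalgamation f J) -> armendariz A) /\
  (armendariz A -> armendariz_on (fA_plus_J f J) ->
     armendariz_on (amalgamation f J)).
Proof.
have [[J0 _ _ _] _] := hJ.
split=> [armAJ | armA armfAJ].
  apply: (armendariz_on_inj_rmorph (@graph_of_inj A B f) _ armAJ).
  by move=> a _; apply: amalgamation_graph.
exact: (armendariz_on_prod (fun _ _ => I) (@amalgamation_snd A B f J) armA armfAJ).
Qed.
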